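(* Let $\Omega$ be either a Segre variety $\mathcal{S}_{\ell,k}(\mathbb{K})$ with $\ell\le3$, $k\ge1$, or one of the line Grassmannians $\mathcal{G}_{5,2}(\mathbb{K})$, $\mathcal{G}_{6,2}(\mathbb{K})$, viewed in the projective space it spans. Then the only subspace of $\langle\Omega\rangle$ which is legal with respect to $\Omega$ is the empty subspace; i.e. $\Omega$ admits no proper legal projection.
   Context: Let $\Omega$ be a Segre variety $\mathcal{S}_{\ell,k}(\mathbb{K})$ (image of the Segre map, i.e. the rank-one $(\ell+1)\times(k+1)$ matrices up to scalars) or a line Grassmannian $\mathcal{G}_{n+1,2}(\mathbb{K})$ (Plücker image of the lines of $\mathbb{P}^n(\mathbb{K})$), with point set $X$; two points are collinear if the line joining them lies in $X$. Let $\Xi$ be the set of subspaces spanned by the convex closures (in $X$) of pairs of non-collinear points at distance 2 (these are grids, resp. Klein quadrics). A subspace $S$ of $\langle X\rangle$ is legal with respect to $\Omega$ if $S$ is disjoint from $\langle\xi_1,\xi_2\rangle$ for all $\xi_1,\xi_2\in\Xi$; a legal projection is a projection from a legal subspace onto a complementary subspace, and it is proper if the subspace is non-empty. *)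

From HB Require Import structures.
From mathcomp Require Import all_boot all_order all_algebra.
Set Implicit Arguments. Unset Strict Implicit. Unset Printing Implicit Defensive.
Import GRing.Theory.
Local Open Scope ring_scope.

(* Point-line geometry of a "variety" given by its cone X of nonzero vectors
   (a point of the projective space = a nonzero vector up to scalars). *)
Section Geometry.
Variables (K : fieldType) (N : nat).
Notation V := 'rV[K]_N.
Variable X : V -> Prop.

Definition collinear (x y : V) : Prop :=
  X x /\ X y /\ forall a b : K, a *: x + b *: y != 0 -> X (a *: x + b *: y).

Fixpoint is_path (x : V) (s : seq V) : Prop :=
  if s is y :: s' then collinear x y /\ is_path y s' else True.

Definition dist_le (x y : V) (n : nat) : Prop :=
  exists s : seq V, [/\ size s = n, is_path x s & last x s = y].

Definition shortest_path (x y : V) (s : seq V) : Prop :=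
  [/\ is_path x s, last x s = y & forall m, (m < size s)%N -> ~ dist_le x y m].

Definition dist2 (x y : V) : Prop :=
  [/\ X x, X y, ~ collinear x y & exists z, collinear x z /\ collinear z y].

Definition convex_subspace (C : V -> Prop) : Prop :=
  [/\ (forall x, C x -> X x),
      (forall x y, C x -> C y -> collinear x y ->
         forall a b : K, a *: x + b *: y != 0 -> C (a *: x + b *: y))
    & (forall x y s, C x -> C y -> shortest_path x y s ->
         forall z, z \in s -> C z)].

Definition convex_closure (p q : V) : V -> Prop :=
  fun v => forall C, convex_subspace C -> C p -> C q -> C v.

Definition in_span (A : V -> Prop) (v : V) : Prop :=
  exists n (w : 'I_n -> V) (c : 'I_n -> K),
    (forall i, A (w i)) /\ v = \sum_(i < n) c i *: w i.

(* the linear subspace (row space of) S is legal w.r.t. X: it meets no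
   <xi1, xi2> with xi1, xi2 in Xi *)
Definition legal (S : 'M[K]_N) : Prop :=
  forall p1 q1 p2 q2, dist2 p1 q1 -> dist2 p2 q2 ->
  forall v : V, (v <= S)%MS ->
    in_span (fun w => convex_closure p1 q1 w \/ convex_closure p2 q2 w) v ->
    v = 0.

End Geometry.

(* Segre variety S_{l,k}(K): rank-one (l+1)x(k+1) matrices, vectorized *)
Definition segre (K : fieldType) (l k : nat) : 'rV[K]_(l.+1 * k.+1) -> Prop :=
  fun v => \rank (vec_mx v : 'M[K]_(l.+1, k.+1)) = 1%N.

(* Line Grassmannian G_{m,2}(K) (lines of P^{m-1}(K)): Plücker image, the
   Plücker vector of the line <u,w> being realized as the skew matrix
   u^T w - w^T u (entry (i,j) = u_i w_j - u_j w_i), vectorized *)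
Definition grass (K : fieldType) (m : nat) : 'rV[K]_(m * m) -> Prop :=
  fun v => exists u w : 'rV[K]_m,
    (u^T *m w - w^T *m u != 0) /\ vec_mx v = u^T *m w - w^T *m u.

From mathcomp Require Import all_boot all_order all_algebra.
From mathcomp Require Import ring zify.
From Stdlib Require Import Classical.
Set Implicit Arguments. Unset Strict Implicit. Unset Printing Implicit Defensive.
Import GRing.Theory.
Local Open Scope ring_scope.

(* For each variety Omega of the statement we show that
   every vector of <Omega> is a sum v1 + v2, each vi a combination of points
   of the convex closure of one pair at distance 2 (xi_span); then every
   vector of S lies in some <xi1, xi2>, so a legal S is zero (legal_eq0).
   The only fact used about convex closures is that a common neighbour of two
   non-collinear points p, q lies on a shortest path from p to q, hence in
   their convex closure (common_neighbour_closure).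
   - Segre variety S_{l,k}, l <= 3: a matrix with two nonzero rows
     e_i (x) w1 + e_j (x) w2 lies in the span of the grid with opposite points
     e_i (x) a, e_j (x) b and common neighbours e_i (x) b, e_j (x) a, where
     a, b span a plane through w1, w2 (plane_through, grid_xi_span); rows
     {0, 1} and rows {2, 3} give the two summands (segre_split).
   - Grassmannians G_{5,2}, G_{6,2}: the six lines of a Klein quadric through
     u1, w1, u2, w2 span <xi> for the opposite lines u1 /\ w1, u2 /\ w2, whose
     common neighbours are the four other lines (klein_xi_span).  An
     alternating matrix splits into its part on the coordinates {0, 1, 2, 3}
     and a part c e_a /\ e_b + e_a /\ f + e_b /\ h with f, h vanishing at
     a, b (pencil_xi_span); each lies in the span of one Klein quadric
     (grass5_split, grass6_split). *)

Section PointLineGeometry.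
Variables (K : fieldType) (N : nat).
Notation V := 'rV[K]_N.
Variable X : V -> Prop.

Definition scale_closed : Prop := forall (x : V) (a : K), X x -> a != 0 -> X (a *: x).

Lemma collinear_sym x y : collinear X x y -> collinear X y x.
Proof. by move=> [Hx [Hy H]]; split; [|split=> // a b]; rewrite // addrC => /H; rewrite addrC. Qed.

Lemma collinear_linear_family (W : lmodType K) (F : W -> V) :
  (forall (a b : K) x y, a *: F x + b *: F y = F (a *: x + b *: y)) ->
  (forall z, F z != 0 -> X (F z)) ->
  forall x y, F x != 0 -> F y != 0 -> collinear X (F x) (F y).
Proof.
by move=> Flin FX x y Hx Hy; split; [|split]; auto; move=> a b; rewrite Flin; apply: FX.
Qed.

Hypothesis Xcone : scale_closed.

Lemma collinear_scalel a x y : a != 0 -> collinear X x y -> collinear X (a *: x) y.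
Proof.
move=> Ha [Hx [Hy H]]; split; [exact: Xcone | split=> // b c].
by rewrite scalerA; apply: H.
Qed.

Lemma collinear_refl x : X x -> collinear X x x.
Proof.
move=> Hx; split; [|split=> // a b]; rewrite // -scalerDl => Hab.
by apply: Xcone => //; apply: contraNneq Hab => ->; rewrite scale0r.
Qed.

(* A common neighbour z of two non-collinear points p, q: then p, q are at
   distance 2, and p z q is a shortest path, so z is in their convex closure. *)
Lemma common_neighbour_closure p q z :
  ~ collinear X p q -> collinear X p z -> collinear X z q ->
  dist2 X p q /\ convex_closure X p q z.
Proof.
move=> Hpq Hpz Hzq; split.
  by split; [case: Hpz | case: Hzq => _ [] | | exists z].
move=> C [_ _ Cpath] Cp Cq; apply: (Cpath p q [:: z; q]) => //; last by rewrite inE eqxx.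
split=> //= m Hm [s [Hs Hpath Hlast]].
case: m Hm Hs => [|[|//]] _.
  move=> /size0nil Es; move: Hlast; rewrite Es /= => Epq.
  by apply: Hpq; rewrite -Epq; apply: collinear_refl; case: Hpz.
by case: s Hpath Hlast => [//|y [|//]] /= [Hpy _] Hy _; apply: Hpq; rewrite -Hy.
Qed.

(* v is a linear combination of points of the convex closure of one pair of
   points at distance 2, i.e. v lies in the span of some member of Xi. *)
Definition xi_span (v : V) : Prop :=
  exists p q (s : seq (K * V)), [/\ dist2 X p q,
    (forall x, x \in s -> convex_closure X p q x.2) & v = \sum_(x <- s) x.1 *: x.2].

Lemma in_span_seq (A : V -> Prop) (s : seq (K * V)) :
  (forall x, x \in s -> A x.2) -> in_span A (\sum_(x <- s) x.1 *: x.2).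
Proof.
move=> Hs; exists (size s), (fun i => (nth (0, 0) s i).2), (fun i => (nth (0, 0) s i).1).
by split; [move=> i; apply/Hs/mem_nth | rewrite (big_nth (0, 0)) big_mkord].
Qed.

Lemma legal_eq0 (S : 'M[K]_N) :
  (forall v, (v <= S)%MS -> exists v1 v2, [/\ xi_span v1, xi_span v2 & v = v1 + v2]) ->
  legal X S -> S = 0.
Proof.
move=> Hsplit HS; apply/row_matrixP => i; rewrite row0.
have [_ [_ [[p1 [q1 [s1 [D1 C1 ->]]]] [p2 [q2 [s2 [D2 C2 ->]]]] E]]] := Hsplit _ (row_sub i S).
apply: (HS p1 q1 p2 q2 D1 D2 _ (row_sub i S)); rewrite E -big_cat.
by apply: in_span_seq => x; rewrite mem_cat => /orP[/C1|/C2]; tauto.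
Qed.

End PointLineGeometry.

Section TwoVectors.
Variables (K : fieldType) (n : nat).
Notation V := 'rV[K]_n.

Definition indep (a b : V) : Prop := forall x y : K, x *: a + y *: b = 0 -> x = 0 /\ y = 0.

Lemma indep_sym a b : indep a b -> indep b a.
Proof. by move=> I x y; rewrite addrC => /I [-> ->]. Qed.

Lemma indep_nzl a b : indep a b -> a != 0.
Proof.
move=> I; apply/eqP => a0; have [|/eqP] := I 1 0; last by rewrite oner_eq0.
by rewrite a0 scaler0 scale0r addr0.
Qed.

Lemma indep_nzr a b : indep a b -> b != 0.
Proof. by move/indep_sym/indep_nzl. Qed.

Lemma dep_multiple c d : c != 0 -> ~ indep c d -> exists g, d = g *: c.
Proof.
move=> Hc Dcd; apply: NNPP => Nmul; apply: Dcd => x y E.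
case: (eqVneq y 0) => [y0|Hy].
  by move: E; rewrite y0 scale0r addr0 => /eqP; rewrite scaler_eq0 (negPf Hc) orbF => /eqP.
case: Nmul; exists (- x / y); apply: (scalerI Hy); rewrite scalerA mulrCA mulfV // mulr1.
by rewrite scaleNr; apply/eqP; rewrite -addr_eq0 addrC E.
Qed.

Lemma indep_with_pair c x0 x1 : c != 0 -> indep x0 x1 -> indep c x0 \/ indep c x1.
Proof.
move=> Hc I01; apply: NNPP => /not_or_and [D0 D1].
have [g0 E0] := dep_multiple Hc D0; have [g1 E1] := dep_multiple Hc D1.
have [|_ /eqP] := I01 g1 (- g0).
  by rewrite E0 E1 !scalerA -scalerDl mulrC mulNr addrN scale0r.
rewrite oppr_eq0 => /eqP g00; case/eqP: (indep_nzl I01).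
by rewrite E0 g00 scale0r.
Qed.

Lemma plane_through (P : V -> Prop) (x0 x1 w1 w2 : V) :
  (forall v (a : K), P v -> P (a *: v)) -> P x0 -> P x1 -> P w1 -> P w2 ->
  indep x0 x1 ->
  exists g h (al1 be1 al2 be2 : K), [/\ indep g h, P g, P h,
     w1 = al1 *: g + be1 *: h & w2 = al2 *: g + be2 *: h].
Proof.
move=> Pscale P0 P1 Pw1 Pw2 I01.
case: (classic (indep w1 w2)) => [Iw|Dw].
  by exists w1, w2, 1, 0, 0, 1; rewrite !scale1r !scale0r addr0 add0r.
have [c [s1 [s2 [Pc E1 E2]]]] : exists c (s1 s2 : K), [/\ P c, w1 = s1 *: c & w2 = s2 *: c].
  case: (eqVneq w1 0) => [w10|Hw1]; first by exists w2, 0, 1; rewrite scale1r scale0r.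
  by have [g Eg] := dep_multiple Hw1 Dw; exists w1, 1, g; rewrite scale1r.
case: (eqVneq c 0) => [c0|Hc].
  by exists x0, x1, 0, 0, 0, 0; rewrite E1 E2 c0 !scaler0 !scale0r addr0.
have [Ic|Ic] := indep_with_pair Hc I01.
  by exists c, x0, s1, 0, s2, 0; rewrite scale0r !addr0.
by exists c, x1, s1, 0, s2, 0; rewrite scale0r !addr0.
Qed.

Lemma indep_minor (g h : V) : indep g h -> exists i j, g 0 i * h 0 j - g 0 j * h 0 i != 0.
Proof.
move=> I; apply: NNPP => Nminor.
have /rV0Pn [i Hi] := indep_nzl I.
have [|_ /eqP] := I (h 0 i) (- g 0 i); last by rewrite oppr_eq0 (negPf Hi).
apply/rowP => j; rewrite !mxE; apply: NNPP => Hj; apply: Nminor; exists i, j.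
by apply/eqP => E; apply: Hj; rewrite -[RHS]oppr0 -E; ring.
Qed.

Definition ev (a : nat) : V := \row_j (if (j : nat) == a then 1 else 0).

Lemma ev_nz (a : 'I_n) : ev a != 0.
Proof. by apply/rV0Pn; exists a; rewrite mxE eqxx oner_eq0. Qed.

Lemma ev_indep (a b : 'I_n) : a != b -> indep (ev a) (ev b).
Proof.
move=> Hab x y /rowP E; have Hba : b != a by rewrite eq_sym.
split; [move: (E a) | move: (E b)];
  by rewrite !mxE !eqxx !val_eqE (negPf Hab, negPf Hba) /= mulr1 mulr0 ?addr0 ?add0r.
Qed.

End TwoVectors.
Arguments ev {K n} a.

Section Segre.
Variable K : fieldType.

Definition tensor m n (x : 'rV[K]_m) (c : 'rV[K]_n) : 'M[K]_(m, n) :=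
  \matrix_(i, j) (x 0 i * c 0 j).

Lemma tensor_nz m n (x : 'rV[K]_m) (c : 'rV[K]_n) : x != 0 -> c != 0 -> tensor x c != 0.
Proof.
move=> /rV0Pn [i Hi] /rV0Pn [j Hj]; apply/eqP => /matrixP /(_ i j) /eqP.
by rewrite !mxE mulf_eq0 (negPf Hi) (negPf Hj).
Qed.

Lemma rank1_rows_dep m n (Z : 'M[K]_(m, n)) i j :
  \rank Z = 1%N -> ~ indep (row i Z) (row j Z).
Proof.
move=> rkZ I; have Hi := indep_nzl I.
have Zi : (Z <= row i Z)%MS by rewrite -(mxrank_leqif_sup (row_sub i Z)).2 rank_rV Hi rkZ.
have /sub_rVP [g Eg] := submx_trans (row_sub j Z) Zi.
have [|_ /eqP] := I g (-1); last by rewrite oppr_eq0 oner_eq0.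
by rewrite Eg scaleN1r subrr.
Qed.

Variables l k : nat.
Notation S := (@segre K l k).

Lemma segre_tensor (x : 'rV[K]_l.+1) (c : 'rV[K]_k.+1) :
  tensor x c != 0 -> S (mxvec (tensor x c)).
Proof.
move=> Hn; rewrite /segre mxvecK; apply/eqP; rewrite eqn_leq lt0n mxrank_eq0 Hn andbT.
have -> : tensor x c = x^T *m c by apply/matrixP => i j; rewrite !mxE big_ord1 !mxE.
exact: leq_trans (mxrankM_maxr _ _) (rank_leq_row _).
Qed.

Lemma segre_cone : scale_closed S.
Proof. by move=> x a; rewrite /segre linearZ /= => Hx Ha; rewrite (eqmx_scale _ Ha). Qed.

Lemma collinear_tensor_l (x : 'rV[K]_l.+1) (c1 c2 : 'rV[K]_k.+1) :
  tensor x c1 != 0 -> tensor x c2 != 0 ->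
  collinear S (mxvec (tensor x c1)) (mxvec (tensor x c2)).
Proof.
move=> H1 H2; apply: (collinear_linear_family (F := fun c => mxvec (tensor x c))); rewrite ?mxvec_eq0 //.
  move=> a b y z; rewrite -!linearZ -linearD /=; congr mxvec.
  by apply/matrixP => i j; rewrite !mxE; ring.
by move=> z; rewrite mxvec_eq0; apply: segre_tensor.
Qed.

Lemma collinear_tensor_r (x1 x2 : 'rV[K]_l.+1) (c : 'rV[K]_k.+1) :
  tensor x1 c != 0 -> tensor x2 c != 0 ->
  collinear S (mxvec (tensor x1 c)) (mxvec (tensor x2 c)).
Proof.
move=> H1 H2; apply: (collinear_linear_family (F := fun x => mxvec (tensor x c))); rewrite ?mxvec_eq0 //.
  move=> a b y z; rewrite -!linearZ -linearD /=; congr mxvec.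
  by apply/matrixP => i j; rewrite !mxE; ring.
by move=> z; rewrite mxvec_eq0; apply: segre_tensor.
Qed.

Lemma grid_xi_span (i j : 'I_l.+1) (a b : 'rV[K]_k.+1) (al1 be1 al2 be2 : K) :
  i != j -> indep a b ->
  xi_span S (mxvec (tensor (ev i) (al1 *: a + be1 *: b) + tensor (ev j) (al2 *: a + be2 *: b))).
Proof.
move=> Hij Iab; have [Ha Hb] := (indep_nzl Iab, indep_nzr Iab).
have [Hi Hj] := (ev_nz K i, ev_nz K j).
set ei : 'rV_l.+1 := ev i; set ej : 'rV_l.+1 := ev j.
set p := mxvec (tensor ei a); set q := mxvec (tensor ej b).
have Npq : ~ collinear S p q.
  move=> [_ [_ Cpq]]; set Z := tensor ei a + tensor ej b.
  have Zi : row i Z = a by apply/rowP => c; rewrite !mxE eqxx val_eqE (negPf Hij); ring.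
  have Zj : row j Z = b by apply/rowP => c; rewrite !mxE eqxx val_eqE eq_sym (negPf Hij); ring.
  have HZ : mxvec Z != 0 by rewrite mxvec_eq0; apply: contraNneq Ha => Z0; rewrite -Zi Z0 row0.
  have := Cpq 1 1; rewrite !scale1r /p /q -linearD => /(_ HZ); rewrite /segre mxvecK.
  by move/rank1_rows_dep => /(_ i j); rewrite Zi Zj.
have [D Cib] := common_neighbour_closure segre_cone Npq
  (collinear_tensor_l (tensor_nz Hi Ha) (tensor_nz Hi Hb))
  (collinear_tensor_r (tensor_nz Hi Hb) (tensor_nz Hj Hb)).
have [_ Cja] := common_neighbour_closure segre_cone Npq
  (collinear_tensor_r (tensor_nz Hi Ha) (tensor_nz Hj Ha))
  (collinear_tensor_l (tensor_nz Hj Ha) (tensor_nz Hj Hb)).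
exists p, q, [:: (al1, p); (be1, mxvec (tensor ei b)); (al2, mxvec (tensor ej a)); (be2, q)].
split=> //; first by move=> x; rewrite !inE => /or4P[] /eqP -> //= C _ _ Cp.
rewrite !big_cons big_nil addr0 /= /p /q -!linearZ -!linearD /=; congr mxvec.
by apply/matrixP => r c; rewrite !mxE; ring.
Qed.

Lemma two_rows_xi_span (M : 'M[K]_(l.+1, k.+1)) (i j : 'I_l.+1) :
  (1 <= k)%N -> i != j -> (forall r, r != i -> r != j -> row r M = 0) ->
  xi_span S (mxvec M).
Proof.
move=> Hk Hij Mrows.
have I01 := @ev_indep K k.+1 ord0 (@Ordinal k.+1 1 Hk) isT.
have [a [b [al1 [be1 [al2 [be2 [Iab _ _ E1 E2]]]]]]] :=
  plane_through (P := fun _ => True) (w1 := row i M) (w2 := row j M)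
    (fun _ _ _ => I) I I I I I01.
suff -> : M = tensor (ev i) (al1 *: a + be1 *: b) + tensor (ev j) (al2 *: a + be2 *: b).
  exact: grid_xi_span.
rewrite -E1 -E2; apply/matrixP => r c; rewrite !mxE !val_eqE.
have [->|Hri] := eqVneq r i; first by rewrite (negPf Hij); ring.
have [->|Hrj] := eqVneq r j; first by ring.
have /rowP /(_ c) := Mrows r Hri Hrj; rewrite !mxE => ->; ring.
Qed.

(* For l <= 3, rows {0, 1} and the rows >= 2 split any matrix into two parts
   with at most two nonzero rows each. *)
Lemma segre_split (v : 'rV[K]_(l.+1 * k.+1)) : (1 <= l <= 3)%N -> (1 <= k)%N ->
  exists v1 v2, [/\ xi_span S v1, xi_span S v2 & v = v1 + v2].
Proof.
case/andP => Hl1 Hl3 Hk; set M := vec_mx v.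
pose M1 := \matrix_(r, c) (if (r < 2)%N then M r c else 0).
have neq_inord a (r : 'I_l.+1) : (a <= l)%N -> (r != inord a) = ((r : nat) != a).
  by move=> Ha; rewrite -val_eqE /= inordK.
exists (mxvec M1), (mxvec (M - M1)); split.
- apply: (two_rows_xi_span (i := inord 0) (j := inord 1)) => // [|r].
    by rewrite -val_eqE /= !inordK.
  rewrite !neq_inord // => Hr0 Hr1; apply/rowP => c; rewrite !mxE ifF //; lia.
- apply: (two_rows_xi_span (i := inord l.-1) (j := @ord_max l)) => // [|r].
    by rewrite eq_sym neq_inord ?leq_pred //=; lia.
  rewrite neq_inord ?leq_pred // -val_eqE /= => Hr0 Hr1.
  have Hr : (r < 2)%N by have := ltn_ord r; lia.
  by apply/rowP => c; rewrite !mxE Hr subrr.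
- by rewrite -linearD /= addrC subrK vec_mxK.
Qed.

End Segre.

Section Grassmannian.
Variables (K : fieldType) (m : nat).
Notation V := 'rV[K]_m.
Notation G := (@grass K m).

Definition wedge (u w : V) : 'M[K]_m := \matrix_(i, j) (u 0 i * w 0 j - w 0 i * u 0 j).

Definition plucker (Z : 'M[K]_m) i j k l := Z i j * Z k l - Z i k * Z j l + Z i l * Z j k.

Lemma wedgeE (u w : V) : u^T *m w - w^T *m u = wedge u w.
Proof. by apply/matrixP => i j; rewrite !mxE !big_ord1 !mxE. Qed.

Lemma grass_wedge (u w : V) : wedge u w != 0 -> G (mxvec (wedge u w)).
Proof. by move=> Hn; exists u, w; rewrite mxvecK wedgeE. Qed.

Lemma grass_wedgeP v : G v -> exists u w : V, wedge u w != 0 /\ v = mxvec (wedge u w).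
Proof. by move=> [u [w [Hn E]]]; exists u, w; rewrite -wedgeE -E vec_mxK E. Qed.

Lemma plucker_wedge (u w : V) i j k l : plucker (wedge u w) i j k l = 0.
Proof. by rewrite /plucker !mxE; ring. Qed.

Lemma wedgeZl a (u w : V) : wedge (a *: u) w = a *: wedge u w.
Proof. by apply/matrixP => i j; rewrite !mxE; ring. Qed.

Lemma wedgeC (u w : V) : wedge w u = - wedge u w.
Proof. by apply/matrixP => i j; rewrite !mxE; ring. Qed.

Lemma wedge_nzC (u w : V) : wedge u w != 0 -> wedge w u != 0.
Proof. by rewrite wedgeC oppr_eq0. Qed.

Lemma mxvec_wedgeC (u w : V) : mxvec (wedge w u) = (-1) *: mxvec (wedge u w).
Proof. by rewrite wedgeC scaleN1r linearN. Qed.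

Lemma grass_cone : scale_closed G.
Proof.
move=> v a /grass_wedgeP [u [w [Hn ->]]] Ha.
rewrite -linearZ -wedgeZl; apply: grass_wedge.
by rewrite wedgeZl scaler_eq0 negb_or Ha.
Qed.

Lemma collinear_wedge_l (u w1 w2 : V) : wedge u w1 != 0 -> wedge u w2 != 0 ->
  collinear G (mxvec (wedge u w1)) (mxvec (wedge u w2)).
Proof.
move=> H1 H2; apply: (collinear_linear_family (F := fun w => mxvec (wedge u w)));
  rewrite ?mxvec_eq0 //.
  move=> a b y z; rewrite -!linearZ -linearD /=; congr mxvec.
  by apply/matrixP => i j; rewrite !mxE; ring.
by move=> z; rewrite mxvec_eq0; apply: grass_wedge.
Qed.

Lemma collinear_wedge_r (u1 u2 w : V) : wedge u1 w != 0 -> wedge u2 w != 0 ->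
  collinear G (mxvec (wedge u1 w)) (mxvec (wedge u2 w)).
Proof.
move=> H1 H2; have N1 : (-1 : K) != 0 by rewrite oppr_eq0 oner_eq0.
rewrite (mxvec_wedgeC w u1) (mxvec_wedgeC w u2).
apply/collinear_scalel/collinear_sym/collinear_scalel/collinear_sym => //; try exact: grass_cone.
by apply: collinear_wedge_l; apply: wedge_nzC.
Qed.

Lemma collinear_wedge_rl (a u b : V) : wedge a u != 0 -> wedge u b != 0 ->
  collinear G (mxvec (wedge a u)) (mxvec (wedge u b)).
Proof.
move=> H1 H2; rewrite (mxvec_wedgeC u a); apply: collinear_scalel; first exact: grass_cone.
  by rewrite oppr_eq0 oner_eq0.
by apply: collinear_wedge_l => //; apply: wedge_nzC.
Qed.

(* The Klein quadric of the lines of the 3-space <u1, w1, u2, w2>: the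
   opposite lines u1 /\ w1 and u2 /\ w2 are not collinear (their sum violates
   a Plücker relation) and the four lines meeting both are common neighbours,
   so every combination of the six lines lies in the span of a member of Xi. *)
Lemma klein_xi_span (u1 w1 u2 w2 : V) :
  wedge u1 w1 != 0 -> wedge u2 w2 != 0 -> wedge u1 u2 != 0 -> wedge u1 w2 != 0 ->
  wedge w1 u2 != 0 -> wedge w1 w2 != 0 ->
  (exists i j k l, plucker (wedge u1 w1 + wedge u2 w2) i j k l != 0) ->
  forall c1 c2 c3 c4 c5 c6 : K,
  xi_span G (mxvec (c1 *: wedge u1 w1 + c2 *: wedge u2 w2 + c3 *: wedge u1 u2
                    + c4 *: wedge u1 w2 + c5 *: wedge w1 u2 + c6 *: wedge w1 w2)).
Proof.
move=> N1 N2 N3 N4 N5 N6 [i [j [k [l Hp]]]] c1 c2 c3 c4 c5 c6.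
set p := mxvec (wedge u1 w1); set q := mxvec (wedge u2 w2).
have Npq : ~ collinear G p q.
  move=> [_ [_ Cpq]]; set Z := wedge u1 w1 + wedge u2 w2.
  have HZ : mxvec Z != 0.
    rewrite mxvec_eq0; apply: contraNneq Hp => Z0.
    by rewrite -/Z Z0 /plucker !mxE; apply/eqP; ring.
  have := Cpq 1 1; rewrite !scale1r /p /q -linearD => /(_ HZ) /grass_wedgeP [u [w [_ EZ]]].
  by move: Hp; rewrite -/Z -[Z]mxvecK EZ mxvecK plucker_wedge eqxx.
have [D C3] := common_neighbour_closure grass_cone Npq (collinear_wedge_l N1 N3) (collinear_wedge_rl N3 N2).
have [_ C4] := common_neighbour_closure grass_cone Npq (collinear_wedge_l N1 N4) (collinear_wedge_r N4 N2).
have [_ C5] := common_neighbour_closure grass_cone Npq (collinear_wedge_rl N1 N5) (collinear_wedge_rl N5 N2).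
have [_ C6] := common_neighbour_closure grass_cone Npq (collinear_wedge_rl N1 N6) (collinear_wedge_r N6 N2).
exists p, q, [:: (c1, p); (c2, q); (c3, mxvec (wedge u1 u2)); (c4, mxvec (wedge u1 w2));
                (c5, mxvec (wedge w1 u2)); (c6, mxvec (wedge w1 w2))].
split=> //; last by rewrite !big_cons big_nil addr0 /= /p /q -!linearZ -!linearD /= !addrA.
by move=> x; rewrite !inE => /or3P[/eqP -> | /eqP -> | /or4P[] /eqP ->] //= C _ Cp.
Qed.

End Grassmannian.

Section KleinFrames.
Variables (K : fieldType) (m : nat).
Notation V := 'rV[K]_m.
Notation G := (@grass K m).

Definition vanishes_at (a b : 'I_m) (x : V) : Prop := x 0 a = 0 /\ x 0 b = 0.

Lemma wedge_ev_nz (a : 'I_m) (x : V) : x 0 a = 0 -> x != 0 -> wedge (ev a) x != 0.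
Proof.
move=> xa /rV0Pn [j Hj]; apply: contraNneq Hj => /matrixP /(_ a j).
by rewrite !mxE eqxx xa mul1r mul0r subr0 => ->.
Qed.

Lemma klein_frame_xi_span (a b : 'I_m) (g h : V) :
  a != b -> indep g h -> vanishes_at a b g -> vanishes_at a b h ->
  forall c1 c2 c3 c4 c5 c6 : K,
  xi_span G (mxvec (c1 *: wedge (ev a) (ev b) + c2 *: wedge g h + c3 *: wedge (ev a) g
                    + c4 *: wedge (ev a) h + c5 *: wedge (ev b) g + c6 *: wedge (ev b) h)).
Proof.
move=> Hab Igh [ga gb] [ha hb]; have Hba : b != a by rewrite eq_sym.
have [Hg Hh] := (indep_nzl Igh, indep_nzr Igh).
have [i [j Hm]] := indep_minor Igh.
have [Hia Hib Hja Hjb] : [/\ i != a, i != b, j != a & j != b].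
  by split; apply: contraNneq Hm => E; rewrite E ?ga ?gb ?ha ?hb !mul0r !mulr0 subrr.
have eb_a : (ev b : V) 0 a = 0 by rewrite mxE val_eqE (negPf Hab).
apply: klein_xi_span; try exact: wedge_ev_nz.
- exact: wedge_ev_nz eb_a (ev_nz K b).
- apply: contraNneq Hm => /matrixP /(_ i j); rewrite !mxE => E.
  by apply/eqP; rewrite -[RHS]E; ring.
exists a, b, i, j; rewrite /plucker !mxE !eqxx !val_eqE.
rewrite (negPf Hab) (negPf Hba) (negPf Hia) (negPf Hib) (negPf Hja) (negPf Hjb) ga gb ha hb.
by apply: contra Hm => /eqP E; apply/eqP; rewrite -[RHS]E; ring.
Qed.

Lemma pencil_xi_span (a b : 'I_m) (x0 x1 f h : V) (c : K) :
  a != b -> indep x0 x1 -> vanishes_at a b x0 -> vanishes_at a b x1 ->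
  vanishes_at a b f -> vanishes_at a b h ->
  xi_span G (mxvec (c *: wedge (ev a) (ev b) + wedge (ev a) f + wedge (ev b) h)).
Proof.
move=> Hab I01 V0 V1 Vf Vh.
have Vscale x (s : K) : vanishes_at a b x -> vanishes_at a b (s *: x).
  by move=> [xa xb]; rewrite /vanishes_at !mxE xa xb mulr0.
have [g [g' [al1 [be1 [al2 [be2 [Igg' Vg Vg' -> ->]]]]]]] := plane_through Vscale V0 V1 Vf Vh I01.
have -> : c *: wedge (ev a) (ev b) + wedge (ev a) (al1 *: g + be1 *: g')
            + wedge (ev b) (al2 *: g + be2 *: g')
          = c *: wedge (ev a) (ev b) + 0 *: wedge g g' + al1 *: wedge (ev a) g
            + be1 *: wedge (ev a) g' + al2 *: wedge (ev b) g + be2 *: wedge (ev b) g'.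
  by apply/matrixP => i j; rewrite !mxE; ring.
exact: klein_frame_xi_span.
Qed.

Definition alternating (A : 'M[K]_m) : Prop := forall i j, A i j = - A j i /\ A i i = 0.

Lemma span_alternating v : in_span G v -> alternating (vec_mx v).
Proof.
move=> [n [w [c [Hw ->]]]] i j; rewrite linear_sum /= !summxE -sumrN.
split; [apply: eq_bigr | apply: big1] => k _; have [u [x [_ ->]]] := grass_wedgeP (Hw k);
  by rewrite linearZ /= mxvecK !mxE; ring.
Qed.

Lemma alternating_entries (A : 'M[K]_m) (B : nat -> nat -> K) :
  alternating A -> (forall i j : 'I_m, B i j = A i j) -> forall i j : 'I_m,
  A i j = if (i < j)%N then B i j else if i == j :> nat then 0 else - B j i.
Proof.
move=> Alt EB i j; rewrite !EB.
by case: ltngtP => [//|_|/val_inj ->]; [exact: (Alt i j).1 | exact: (Alt j j).2].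
Qed.

End KleinFrames.

Section SmallGrassmannians.
Variable K : fieldType.

(* In G_{6,2}, an alternating matrix is the sum of its part on the
   coordinates {0, 1, 2, 3}, inside the Klein quadric of e_0, ..., e_3, and of
   B45 e_4 /\ e_5 + e_4 /\ f + e_5 /\ h with f, h in <e_0, ..., e_3>. *)
Lemma grass6_split (v : 'rV[K]_(6 * 6)) : in_span (@grass K 6) v ->
  exists v1 v2, [/\ xi_span (@grass K 6) v1, xi_span (@grass K 6) v2 & v = v1 + v2].
Proof.
move=> /span_alternating Alt; pose A := vec_mx v.
pose B a b := A (inord a) (inord b); pose e a : 'rV[K]_6 := ev a.
pose f : 'rV[K]_6 := \row_j (if (j < 4)%N then - B j 4 else 0).
pose h : 'rV[K]_6 := \row_j (if (j < 4)%N then - B j 5 else 0).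
pose o a (Ha : (a < 6)%N) := Ordinal Ha.
exists (mxvec (B 0 1 *: wedge (e 0) (e 1) + B 2 3 *: wedge (e 2) (e 3)
          + B 0 2 *: wedge (e 0) (e 2) + B 0 3 *: wedge (e 0) (e 3)
          + B 1 2 *: wedge (e 1) (e 2) + B 1 3 *: wedge (e 1) (e 3))),
       (mxvec (B 4 5 *: wedge (e 4) (e 5) + wedge (e 4) f + wedge (e 5) h)).
split.
- apply: (klein_frame_xi_span (a := o 0 isT) (b := o 1 isT)) => //;
    [exact: (ev_indep (a := o 2 isT) (b := o 3 isT)) | by rewrite /vanishes_at !mxE ..].
- apply: (pencil_xi_span (a := o 4 isT) (b := o 5 isT) (x0 := e 0) (x1 := e 1)) => //;
    [exact: (ev_indep (a := o 0 isT) (b := o 1 isT)) | by rewrite /vanishes_at !mxE ..].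
- have -> : v = mxvec A by rewrite vec_mxK.
  rewrite -linearD; congr mxvec; apply/matrixP => i j.
  rewrite (alternating_entries (B := B) Alt) => [|a b]; last by rewrite /B !inord_val.
  rewrite !mxE.
  by case: i => [[|[|[|[|[|[|//]]]]]] Hi]; case: j => [[|[|[|[|[|[|//]]]]]] Hj] /=; ring.
Qed.

(* In G_{5,2}, an alternating matrix is the sum of its part on the
   coordinates {0, 1, 2, 3} and of -B04 e_4 /\ e_0 + e_4 /\ f with f in
   <e_1, e_2, e_3>. *)
Lemma grass5_split (v : 'rV[K]_(5 * 5)) : in_span (@grass K 5) v ->
  exists v1 v2, [/\ xi_span (@grass K 5) v1, xi_span (@grass K 5) v2 & v = v1 + v2].
Proof.
move=> /span_alternating Alt; pose A := vec_mx v.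
pose B a b := A (inord a) (inord b); pose e a : 'rV[K]_5 := ev a.
pose f : 'rV[K]_5 := \row_j (if (0 < j < 4)%N then - B j 4 else 0).
pose o a (Ha : (a < 5)%N) := Ordinal Ha.
exists (mxvec (B 0 1 *: wedge (e 0) (e 1) + B 2 3 *: wedge (e 2) (e 3)
          + B 0 2 *: wedge (e 0) (e 2) + B 0 3 *: wedge (e 0) (e 3)
          + B 1 2 *: wedge (e 1) (e 2) + B 1 3 *: wedge (e 1) (e 3))),
       (mxvec (- B 0 4 *: wedge (e 4) (e 0) + wedge (e 4) f + wedge (e 0) 0)).
split.
- apply: (klein_frame_xi_span (a := o 0 isT) (b := o 1 isT)) => //;
    [exact: (ev_indep (a := o 2 isT) (b := o 3 isT)) | by rewrite /vanishes_at !mxE ..].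
- apply: (pencil_xi_span (a := o 4 isT) (b := o 0 isT) (x0 := e 1) (x1 := e 2)) => //;
    [exact: (ev_indep (a := o 1 isT) (b := o 2 isT)) | by rewrite /vanishes_at !mxE ..].
- have -> : v = mxvec A by rewrite vec_mxK.
  rewrite -linearD; congr mxvec; apply/matrixP => i j.
  rewrite (alternating_entries (B := B) Alt) => [|a b]; last by rewrite /B !inord_val.
  rewrite !mxE.
  by case: i => [[|[|[|[|[|//]]]]] Hi]; case: j => [[|[|[|[|[|//]]]]] Hj] /=; ring.
Qed.

End SmallGrassmannians.

Theorem proposition3p8 (K : fieldType) :
  (forall l k : nat, (1 <= l <= 3)%N -> (1 <= k)%N ->
     forall S : 'M[K]_(l.+1 * k.+1),
       (forall v, (v <= S)%MS -> in_span (@segre K l k) v) ->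
       legal (@segre K l k) S -> S = 0)
  /\
  (forall m : nat, (m = 5 \/ m = 6)%N ->
     forall S : 'M[K]_(m * m),
       (forall v, (v <= S)%MS -> in_span (@grass K m) v) ->
       legal (@grass K m) S -> S = 0).
Proof.
split=> [l k Hl Hk S _ | m [] -> S Sspan].
- by apply: legal_eq0 => v _; apply: segre_split.
- by apply: legal_eq0 => v /Sspan; apply: grass5_split.
- by apply: legal_eq0 => v /Sspan; apply: grass6_split.
Qed.
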